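(* Let $\boldsymbol\pi\in H_{1,2,2}$ be a primary prime quaternion and $p=N(\boldsymbol\pi)$. Then the p-conjugate $\overline{\boldsymbol\pi}_p$ equals $\overline{\boldsymbol\pi}$ if $p\equiv1\pmod4$ and equals $-\overline{\boldsymbol\pi}$ if $p\equiv-1\pmod4$.
   Context: Let $\mathbf{i},\mathbf{j},\mathbf{k}$ be the standard quaternion units; $\overline{\mathbf{q}}$ is quaternion conjugation and $N(\mathbf{q})=\mathbf{q}\overline{\mathbf{q}}$. $H_{1,2,2}$ is the subring of the quaternions equal to the $\mathbb{Z}$-module generated by $\mathbf{v}_1=1$, $\mathbf{v}_2=\mathbf{i}$, $\mathbf{v}_3=\tfrac12(1+\mathbf{i}+\sqrt2\,\mathbf{j})$, $\mathbf{v}_4=\tfrac12(1+\mathbf{i}+\sqrt2\,\mathbf{k})$. A prime of $H_{1,2,2}$ is a nonzero non-invertible element $\boldsymbol\pi$ such that any factorization $\boldsymbol\pi=\mathbf{a}\mathbf{b}$ in $H_{1,2,2}$ has $\mathbf{a}$ or $\mathbf{b}$ invertible. Let $I=2(1+\mathbf{i})H_{1,2,2}$ (equal to $H_{1,2,2}\,2(1+\mathbf{i})$). An element $\mathbf{q}\in H_{1,2,2}$ is primary if $\mathbf{q}-1\in I$ or $\mathbf{q}-(1+2\mathbf{v}_3)\in I$. For a primary prime $\boldsymbol\pi$, its p-conjugate is $\overline{\boldsymbol\pi}_p=\overline{\boldsymbol\pi}$ if $\boldsymbol\pi-1\in I$ and $\overline{\boldsymbol\pi}_p=-\overline{\boldsymbol\pi}$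 if $\boldsymbol\pi-(1+2\mathbf{v}_3)\in I$. *)

From Stdlib Require Import Reals ZArith Classical ClassicalEpsilon.
Open Scope R_scope.

Record quat := Quat { qre : R; qim : R; qjm : R; qkm : R }.

Definition qadd (p q : quat) : quat :=
  Quat (qre p + qre q) (qim p + qim q) (qjm p + qjm q) (qkm p + qkm q).
Definition qopp (p : quat) : quat := Quat (- qre p) (- qim p) (- qjm p) (- qkm p).
Definition qsub (p q : quat) : quat := qadd p (qopp q).
Definition qmul (p q : quat) : quat :=
  Quat (qre p * qre q - qim p * qim q - qjm p * qjm q - qkm p * qkm q)
       (qre p * qim q + qim p * qre q + qjm p * qkm q - qkm p * qjm q)
       (qre p * qjm q - qim p * qkm q + qjm p * qre q + qkm p * qim q)
       (qre p * qkm q + qim p * qjm q - qjm p * qim q + qkm p * qre q).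
Definition qconj (p : quat) : quat := Quat (qre p) (- qim p) (- qjm p) (- qkm p).
Definition qscal (r : R) : quat := Quat r 0 0 0.
Definition qzero : quat := qscal 0.
Definition qone : quat := qscal 1.
Definition qi : quat := Quat 0 1 0 0.
Definition qj : quat := Quat 0 0 1 0.
Definition qk : quat := Quat 0 0 0 1.
Definition qsmul (r : R) (p : quat) : quat := qmul (qscal r) p.

Definition qN (q : quat) : quat := qmul q (qconj q).

Definition v1 : quat := qone.
Definition v2 : quat := qi.
Definition v3 : quat := qsmul (1/2) (qadd (qadd qone qi) (qsmul (sqrt 2) qj)).
Definition v4 : quat := qsmul (1/2) (qadd (qadd qone qi) (qsmul (sqrt 2) qk)).

(* membership in H_{1,2,2}: the Z-module generated by v1..v4 *)
Definition inH (q : quat) : Prop :=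
  exists n1 n2 n3 n4 : Z,
    q = qadd (qadd (qsmul (IZR n1) v1) (qsmul (IZR n2) v2))
             (qadd (qsmul (IZR n3) v3) (qsmul (IZR n4) v4)).

Definition unitH (q : quat) : Prop :=
  inH q /\ exists r, inH r /\ qmul q r = qone /\ qmul r q = qone.

Definition primeH (pi : quat) : Prop :=
  inH pi /\ pi <> qzero /\ ~ unitH pi /\
  forall a b, inH a -> inH b -> pi = qmul a b -> unitH a \/ unitH b.

Definition inI (q : quat) : Prop :=
  exists h, inH h /\ q = qmul (qsmul 2 (qadd qone qi)) h.

Definition primary (q : quat) : Prop :=
  inH q /\
  (inI (qsub q qone) \/ inI (qsub q (qadd qone (qsmul 2 v3)))).

Definition pconj (pi : quat) : quat :=
  if excluded_middle_informative (inI (qsub pi qone)) then qconj pi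
  else qopp (qconj pi).

(** Both primary classes are cosets of the ideal [I = 2(1+i)H], and an
    element [2(1+i)h] of [I] has coordinates
    [(2(n1-n2), 2(n1+n2+n3+n4), sqrt2 (n3-n4), sqrt2 (n3+n4))] in the basis
    [1, i, j, k].  Expanding the norm of [1 + x], resp. [1 + 2 v3 + x], for
    such an [x] shows [N(pi) = 1], resp. [3], modulo 4; since the p-conjugate
    is defined by the class of [pi], the norm modulo 4 determines it. *)
From Stdlib Require Import Reals ZArith Lra ClassicalEpsilon.
Open Scope R_scope.

Lemma sqrt2_mul_sqr (r : R) : (sqrt 2 * r) ^ 2 = 2 * r ^ 2.
Proof. rewrite Rpow_mult_distr, pow2_sqrt; lra. Qed.

Lemma qre_qN (q : quat) :
  qre (qN q) = qre q ^ 2 + qim q ^ 2 + qjm q ^ 2 + qkm q ^ 2.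
Proof. destruct q; unfold qN, qmul, qconj; simpl; ring. Qed.

Lemma qsub_eq_qadd (q u x : quat) : qsub q u = x -> q = qadd u x.
Proof.
  intros <-; destruct q, u; unfold qadd, qsub, qopp; simpl; f_equal; ring.
Qed.

Lemma inI_coords (x : quat) : inI x ->
  exists n1 n2 n3 n4 : Z,
    x = Quat (2 * IZR (n1 - n2)) (2 * IZR (n1 + n2 + n3 + n4))
             (sqrt 2 * IZR (n3 - n4)) (sqrt 2 * IZR (n3 + n4)).
Proof.
  intros [h [[n1 [n2 [n3 [n4 ->]]]] ->]].
  exists n1, n2, n3, n4.
  unfold qmul, qadd, qsmul, qscal, qone, qi, qj, qk, v1, v2, v3, v4; simpl.
  rewrite ?plus_IZR, ?minus_IZR; f_equal; field.
Qed.

Lemma one_add_2v3 : qadd qone (qsmul 2 v3) = Quat 2 1 (sqrt 2) 0.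
Proof.
  cbv [v3 qadd qsmul qmul qscal qone qi qj qre qim qjm qkm].
  f_equal; field.
Qed.

Lemma qN_mod4_of_class_one (q : quat) (p : Z) :
  inI (qsub q qone) -> qN q = qscal (IZR p) -> (p mod 4 = 1)%Z.
Proof.
  intros HI HN.
  destruct (inI_coords _ HI) as [n1 [n2 [n3 [n4 Hx]]]].
  apply qsub_eq_qadd in Hx.
  assert (Hp : exists m, p = (1 + 4 * m)%Z).
  { exists ((n1 - n2) + (n1 - n2) * (n1 - n2)
            + (n1 + n2 + n3 + n4) * (n1 + n2 + n3 + n4) + n3 * n3 + n4 * n4)%Z.
    apply eq_IZR.
    change (IZR p) with (qre (qscal (IZR p))).
    rewrite <- HN, qre_qN, Hx.
    unfold qadd, qone, qscal; cbn [qre qim qjm qkm].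
    rewrite !Rplus_0_l, !sqrt2_mul_sqr.
    repeat rewrite ?plus_IZR, ?minus_IZR, ?mult_IZR; ring. }
  destruct Hp as [m ->].
  rewrite Z.mul_comm, Z_mod_plus_full; reflexivity.
Qed.

Lemma qN_mod4_of_class_one_add_2v3 (q : quat) (p : Z) :
  inI (qsub q (qadd qone (qsmul 2 v3))) -> qN q = qscal (IZR p) ->
  (p mod 4 = 3)%Z.
Proof.
  intros HI HN.
  destruct (inI_coords _ HI) as [n1 [n2 [n3 [n4 Hx]]]].
  apply qsub_eq_qadd in Hx.
  assert (Hp : exists m, p = (3 + 4 * m)%Z).
  { exists ((1 + n1 - n2) * (1 + n1 - n2) + (n1 + n2 + n3 + n4)
            + (n1 + n2 + n3 + n4) * (n1 + n2 + n3 + n4)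
            + (n3 - n4) + n3 * n3 + n4 * n4)%Z.
    apply eq_IZR.
    change (IZR p) with (qre (qscal (IZR p))).
    rewrite <- HN, qre_qN, Hx, one_add_2v3.
    unfold qadd; cbn [qre qim qjm qkm].
    replace (sqrt 2 + sqrt 2 * IZR (n3 - n4))
      with (sqrt 2 * (1 + IZR (n3 - n4))) by ring.
    rewrite Rplus_0_l, !sqrt2_mul_sqr.
    repeat rewrite ?plus_IZR, ?minus_IZR, ?mult_IZR; ring. }
  destruct Hp as [m ->].
  rewrite Z.mul_comm, Z_mod_plus_full; reflexivity.
Qed.

Theorem lemma50 (pi : quat) (p : Z) :
  primeH pi -> primary pi -> qN pi = qscal (IZR p) ->
  ((p mod 4 = 1)%Z -> pconj pi = qconj pi) /\
  ((p mod 4 = 3)%Z -> pconj pi = qopp (qconj pi)).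
Proof.
  intros _ [_ Hclass] HN.
  unfold pconj.
  destruct (excluded_middle_informative (inI (qsub pi qone))) as [H1 | H1].
  - pose proof (qN_mod4_of_class_one _ _ H1 HN).
    split; intros; [reflexivity | congruence].
  - destruct Hclass as [H | H]; [contradiction |].
    pose proof (qN_mod4_of_class_one_add_2v3 _ _ H HN).
    split; intros; [congruence | reflexivity].
Qed.
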